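(* Let $B$ be a Boolean algebra, $W\subset B^n$ a Boolean domain, $A,A'\subset W$ finite subsets and $f:A\to A'$ a bijection. Then $f$ is the restriction of a Boolean isomorphism $W\to W$ if and only if $d(f(x),f(y))=d(x,y)$ for all $x,y\in A$, where $d(x,y)=\bigvee_{i=1}^n(x_i\triangle y_i)$.
   Context: A Boolean function $f:B^n\to B$ is a function given by a polynomial expression in the variables, elements of $B$ and the Boolean operations. A Boolean domain is the zero set in $B^n$ of a Boolean function. A Boolean transformation between Boolean domains $U\subset B^n$, $V\subset B^m$ is a map $U\to V$ given coordinatewise by Boolean functions $B^n\to B$; a Boolean isomorphism is a bijective Boolean transformation. $\triangle$ denotes symmetric difference in $B$. *)

(* A Boolean algebra is a complemented (top/bottom) distributive
   lattice: mathcomp's ctbDistrLatticeType. *)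
From HB Require Import structures.
From mathcomp Require Import all_boot all_order.
Set Implicit Arguments. Unset Strict Implicit. Unset Printing Implicit Defensive.
Import Order.TTheory.
Local Open Scope order_scope.

Definition bvec (d : Order.disp_t) (B : ctbDistrLatticeType d) (n : nat) :=
  {ffun 'I_n -> B}.

Inductive bterm (d : Order.disp_t) (B : ctbDistrLatticeType d) (n : nat) : Type :=
| BVar of 'I_n
| BConst of B
| BJoin of bterm B n & bterm B n
| BMeet of bterm B n & bterm B n
| BCompl of bterm B n.

Fixpoint beval d (B : ctbDistrLatticeType d) n (t : bterm B n) (x : bvec B n) : B :=
  match t with
  | BVar i => x i
  | BConst b => b
  | BJoin t1 t2 => beval t1 x `|` beval t2 x
  | BMeet t1 t2 => beval t1 x `&` beval t2 x
  | BCompl t1 => ~` beval t1 x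
  end.

Definition is_boolean_function d (B : ctbDistrLatticeType d) n (g : bvec B n -> B) :=
  exists t : bterm B n, forall x, g x = beval t x.

(* The Boolean domain given as the zero set of the Boolean function beval p. *)
Definition bdomain d (B : ctbDistrLatticeType d) n (p : bterm B n) : pred (bvec B n) :=
  fun x => beval p x == \bot.

Definition is_boolean_transformation d (B : ctbDistrLatticeType d) n m
  (U : pred (bvec B n)) (V : pred (bvec B m)) (F : bvec B n -> bvec B m) :=
  (exists t : 'I_m -> bterm B n, forall x, U x -> forall j, F x j = beval (t j) x)
  /\ (forall x, U x -> V (F x)).

Definition is_boolean_isomorphism d (B : ctbDistrLatticeType d) n m
  (U : pred (bvec B n)) (V : pred (bvec B m)) (F : bvec B n -> bvec B m) :=
  is_boolean_transformation U V F
  /\ (forall x y, U x -> U y -> F x = F y -> x = y)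
  /\ (forall y, V y -> exists2 x, U x & F x = y).

Definition bsymdiff d (B : ctbDistrLatticeType d) (a b : B) : B :=
  (a `\` b) `|` (b `\` a).

Definition bdist d (B : ctbDistrLatticeType d) n (x y : bvec B n) : B :=
  \join_(i < n) bsymdiff (x i) (y i).

From mathcomp Require Import all_boot all_order.

Set Implicit Arguments. Unset Strict Implicit. Unset Printing Implicit Defensive.
Import Order.Theory.
Local Open Scope order_scope.

(* The key notion is local agreement: a and b agree on r when a ∧ r = b ∧ r.
   Every Boolean operation respects agreement on r, hence so does every
   Boolean function and every Boolean transformation (agree_beval,
   btrans_agree).  Since x and y agree exactly on ~d(x,y) (vagreeP), a Boolean
   transformation can only shrink distances, and an injective one between
   Boolean domains preserves them: otherwise the "mixture" of x and y that
   equals x on ~d(Gx,Gy) and y elsewhere stays in the domain and has the same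
   image as y (biso_bdist).  This is the easy direction of the theorem.

   Conversely, for b, c in W the map swap_map b c, which sends x to b where x
   agrees with c, to c where x agrees with b (and not with c), and leaves x
   unchanged elsewhere, is an involutive Boolean automorphism of W mapping c
   to b and fixing every y with d(c,y) = d(b,y).  Composing such swaps along
   the list A extends any distance-preserving f (extend_isometry). *)

Section BooleanDomains.
Variables (d : Order.disp_t) (B : ctbDistrLatticeType d).
Implicit Types r e a b c : B.

Definition agree r a b := a `&` r = b `&` r.

Definition bselect e a b := (a `&` e) `|` (b `&` ~` e).

Lemma agree_sym r a b : agree r a b -> agree r b a.
Proof. exact: esym. Qed.

Lemma agree_trans r a b c : agree r a b -> agree r b c -> agree r a c.
Proof. by rewrite /agree => ->. Qed.

Lemma agree_sub r r' a b : r' <= r -> agree r a b -> agree r' a b.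
Proof. by move=> /meet_idPr <-; rewrite /agree !meetA => ->. Qed.

Lemma agree_split r e a b :
  agree (r `&` e) a b -> agree (r `&` ~` e) a b -> agree r a b.
Proof. by rewrite /agree => h1 h2; rewrite -[r]meetx1 -(joinxC e) !meetUr h1 h2. Qed.

Lemma agree_cases e a b : agree e a b -> agree (~` e) a b -> a = b.
Proof.
move=> h1 h2; suff: agree \top a b by rewrite /agree !meetx1.
by apply: (agree_split (e := e)); rewrite meet1x.
Qed.

Lemma agree_topP r e : reflect (agree r e \top) (r <= e).
Proof. by rewrite /agree meet1x; exact: meet_idPr. Qed.

Lemma agree_botP r e : reflect (agree r e \bot) (r <= ~` e).
Proof. by rewrite -disj_leC /agree meet0x meetC; exact: eqP. Qed.

Lemma agree_join r a a' b b' :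
  agree r a b -> agree r a' b' -> agree r (a `|` a') (b `|` b').
Proof. by rewrite /agree !meetUl => -> ->. Qed.

Lemma agree_meet r a a' b b' :
  agree r a b -> agree r a' b' -> agree r (a `&` a') (b `&` b').
Proof.
rewrite /agree => h1 h2.
by rewrite -[r in LHS]meetxx meetACA h1 h2 -meetACA meetxx.
Qed.

Lemma agree_compl r a b : agree r a b -> agree r (~` a) (~` b).
Proof.
have complE x : ~` x `&` r = ~` (x `&` r) `&` r.
  by rewrite complI meetUl meetCx joinx0.
by rewrite /agree complE (complE b) => ->.
Qed.

Lemma agree_bselect_l r e a b : agree r e \top -> agree r (bselect e a b) a.
Proof.
move=> he; apply: (@agree_trans _ _ ((a `&` \top) `|` (b `&` ~` \top))).
  by apply: agree_join; apply: agree_meet => //; apply: agree_compl.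
by rewrite meetx1 compl1 meetx0 joinx0.
Qed.

Lemma agree_bselect_r r e a b : agree r e \bot -> agree r (bselect e a b) b.
Proof.
move=> he; apply: (@agree_trans _ _ ((a `&` \bot) `|` (b `&` ~` \bot))).
  by apply: agree_join; apply: agree_meet => //; apply: agree_compl.
by rewrite meetx0 compl0 meetx1 join0x.
Qed.

Lemma bsymdiffE a b : bsymdiff a b = (a `&` ~` b) `|` (b `&` ~` a).
Proof. by rewrite /bsymdiff !diffE. Qed.

Lemma bsymdiffC a b : bsymdiff a b = bsymdiff b a.
Proof. by rewrite /bsymdiff joinC. Qed.

Lemma bsymdiffxx a : bsymdiff a a = \bot.
Proof. by rewrite bsymdiffE meetxC joinxx. Qed.

Lemma agree_bsymdiff r a a' b b' :
  agree r a a' -> agree r b b' -> agree r (bsymdiff a b) (bsymdiff a' b').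
Proof.
move=> ha hb; rewrite !bsymdiffE.
by apply: agree_join; apply: agree_meet => //; apply: agree_compl.
Qed.

Lemma bsymdiff0_agree r a b : agree r (bsymdiff a b) \bot -> agree r a b.
Proof.
rewrite /agree meet0x bsymdiffE meetUl => /eqP; rewrite join_eq0.
have le_of_disj x y : (x `&` r) `&` ~` y == \bot -> x `&` r <= y `&` r.
  by rewrite disj_leC complK lexI leIr andbT.
rewrite (meetAC a) (meetAC b) => /andP[/le_of_disj hab /le_of_disj hba].
by apply: le_anti; rewrite hab hba.
Qed.

Section Vectors.
Variable n : nat.
Local Notation V := (bvec B n).
Implicit Types x y z : V.

Definition vagree r x y := forall i, agree r (x i) (y i).

Definition vbselect e x y : V := [ffun i => bselect e (x i) (y i)].

Lemma vagree_refl r x : vagree r x x.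
Proof. by []. Qed.

Lemma vagree_sym r x y : vagree r x y -> vagree r y x.
Proof. by move=> h i; apply: agree_sym. Qed.

Lemma vagree_trans r x y z : vagree r x y -> vagree r y z -> vagree r x z.
Proof. by move=> h1 h2 i; apply: agree_trans (h1 i) (h2 i). Qed.

Lemma vagree_sub r r' x y : r' <= r -> vagree r x y -> vagree r' x y.
Proof. by move=> h hv i; apply: agree_sub h (hv i). Qed.

Lemma vagree_split r e x y :
  vagree (r `&` e) x y -> vagree (r `&` ~` e) x y -> vagree r x y.
Proof. by move=> h1 h2 i; apply: agree_split (h1 i) (h2 i). Qed.

Lemma vagree_cases e x y : vagree e x y -> vagree (~` e) x y -> x = y.
Proof. by move=> h1 h2; apply/ffunP => i; apply: agree_cases (h1 i) (h2 i). Qed.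

Lemma vagree_bselect_l r e x y : agree r e \top -> vagree r (vbselect e x y) x.
Proof. by move=> h i; rewrite ffunE; apply: agree_bselect_l. Qed.

Lemma vagree_bselect_r r e x y : agree r e \bot -> vagree r (vbselect e x y) y.
Proof. by move=> h i; rewrite ffunE; apply: agree_bselect_r. Qed.

Lemma bdistxx x : bdist x x = \bot.
Proof. by rewrite /bdist big1 // => i _; rewrite bsymdiffxx. Qed.

Lemma bdistC x y : bdist x y = bdist y x.
Proof. by apply: eq_bigr => i _; rewrite bsymdiffC. Qed.

Lemma agree_bdist r x x' y y' :
  vagree r x x' -> vagree r y y' -> agree r (bdist x y) (bdist x' y').
Proof.
move=> hx hy; rewrite /bdist; elim/big_rec2: _ => [|i a b _ hab]; first by [].
by apply: agree_join => //; apply: agree_bsymdiff.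
Qed.

Lemma vagreeP r x y : reflect (vagree r x y) (r <= ~` bdist x y).
Proof.
apply: (iffP idP) => [hr i | h].
  apply/bsymdiff0_agree/agree_botP; apply: (le_trans hr); rewrite leC.
  exact: (joins_sup (P := xpredT) (fun i => bsymdiff (x i) (y i))).
by apply/agree_botP; rewrite -(bdistxx y); apply: agree_bdist.
Qed.

Lemma agree_beval r (t : bterm B n) x y :
  vagree r x y -> agree r (beval t x) (beval t y).
Proof.
move=> h; elim: t => [i|b|t1 IH1 t2 IH2|t1 IH1 t2 IH2|t1 IH1] //=.
- exact: agree_join.
- exact: agree_meet.
- exact: agree_compl.
Qed.

Lemma bfun_var i : is_boolean_function (fun x : V => x i).
Proof. by exists (BVar B i). Qed.

Lemma bfun_const b : is_boolean_function (fun _ : V => b).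
Proof. by exists (BConst n b). Qed.

Lemma bfun_join g h : is_boolean_function g -> is_boolean_function h ->
  is_boolean_function (fun x : V => g x `|` h x).
Proof. by move=> [t1 h1] [t2 h2]; exists (BJoin t1 t2) => x /=; rewrite h1 h2. Qed.

Lemma bfun_meet g h : is_boolean_function g -> is_boolean_function h ->
  is_boolean_function (fun x : V => g x `&` h x).
Proof. by move=> [t1 h1] [t2 h2]; exists (BMeet t1 t2) => x /=; rewrite h1 h2. Qed.

Lemma bfun_compl g : is_boolean_function g ->
  is_boolean_function (fun x : V => ~` g x).
Proof. by move=> [t ht]; exists (BCompl t) => x /=; rewrite ht. Qed.

Lemma bfun_bselect (s g h : V -> B) :
  is_boolean_function s -> is_boolean_function g -> is_boolean_function h ->
  is_boolean_function (fun x => bselect (s x) (g x) (h x)).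
Proof.
by move=> hs hg hh; apply: bfun_join; apply: bfun_meet => //; apply: bfun_compl.
Qed.

Lemma bfun_bdist (c : V) : is_boolean_function (fun x : V => bdist x c).
Proof.
have bfun_symdiff i : is_boolean_function (fun x : V => bsymdiff (x i) (c i)).
  have [t ht] := bfun_join (bfun_meet (bfun_var i) (bfun_compl (bfun_const (c i))))
                           (bfun_meet (bfun_const (c i)) (bfun_compl (bfun_var i))).
  by exists t => x; rewrite bsymdiffE ht.
have [t ht] := fin_all_exists bfun_symdiff.
exists (\big[@BJoin _ _ n/BConst n \bot]_(i < n) t i) => x.
by rewrite /bdist; elim/big_rec2: _ => [//|i a u _ ->] /=; rewrite ht.
Qed.

End Vectors.

Section Transformations.
Variables (n m : nat) (p : bterm B n) (q : bterm B m).

Lemma bdomain_agree r (z w : bvec B n) :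
  bdomain p w -> vagree r z w -> agree r (beval p z) \bot.
Proof. by move=> /eqP <-; apply: agree_beval. Qed.

Lemma bdomain_cases e (z : bvec B n) :
  agree e (beval p z) \bot -> agree (~` e) (beval p z) \bot -> bdomain p z.
Proof. by move=> h1 h2; apply/eqP; apply: agree_cases h1 h2. Qed.

Lemma bdomain_bselect e (x y : bvec B n) :
  bdomain p x -> bdomain p y -> bdomain p (vbselect e x y).
Proof.
move=> Wx Wy; apply: (bdomain_cases (e := e)).
  by apply: bdomain_agree Wx _; apply/vagree_bselect_l/agree_topP.
by apply: bdomain_agree Wy _; apply/vagree_bselect_r/agree_botP.
Qed.

Lemma btrans_agree (U : pred (bvec B n)) (U' : pred (bvec B m)) G r x y :
  is_boolean_transformation U U' G -> U x -> U y ->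
  vagree r x y -> vagree r (G x) (G y).
Proof.
by move=> [[t ht] _] Ux Uy h j; rewrite (ht x Ux) (ht y Uy); apply: agree_beval.
Qed.

Lemma btrans_bdist_le (U : pred (bvec B n)) (U' : pred (bvec B m)) G x y :
  is_boolean_transformation U U' G -> U x -> U y -> bdist (G x) (G y) <= bdist x y.
Proof.
by move=> hG Ux Uy; rewrite -leC; apply/vagreeP/(btrans_agree hG) => //; apply/vagreeP.
Qed.

(* Boolean isomorphisms between Boolean domains preserve distances: if
   x, y did not agree on all of ~d(Gx,Gy), the mixture z of x (on that
   region) and y (elsewhere) would be a point of the domain with G z = G y
   but z <> y. *)
Lemma biso_bdist G x y :
  is_boolean_isomorphism (bdomain p) (bdomain q) G -> bdomain p x -> bdomain p y ->
  bdist (G x) (G y) = bdist x y.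
Proof.
move=> [hG [Ginj _]] Wx Wy; apply: le_anti; rewrite (btrans_bdist_le hG) //=.
rewrite -leC; set r := ~` bdist (G x) (G y); apply/vagreeP.
set z := vbselect r x y.
have hzx : vagree r z x by apply/vagree_bselect_l/agree_topP.
have Wz : bdomain p z by apply: bdomain_bselect.
have hGz : G z = G y.
  apply: (vagree_cases (e := r)).
    by apply: vagree_trans (btrans_agree hG Wz Wx hzx) _; apply/vagreeP.
  by apply: (btrans_agree hG) => //; apply/vagree_bselect_r/agree_botP.
by move: hzx; rewrite (Ginj _ _ Wz Wy hGz) => /vagree_sym.
Qed.

End Transformations.

Section Composition.
Variables (n m l : nat).

Fixpoint bsubst (s : 'I_m -> bterm B n) (t : bterm B m) : bterm B n :=
  match t with
  | BVar i => s i
  | BConst b => BConst n b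
  | BJoin t1 t2 => BJoin (bsubst s t1) (bsubst s t2)
  | BMeet t1 t2 => BMeet (bsubst s t1) (bsubst s t2)
  | BCompl t1 => BCompl (bsubst s t1)
  end.

Lemma beval_bsubst s t x : beval (bsubst s t) x = beval t [ffun i => beval (s i) x].
Proof. by elim: t => [i|b|t1 IH1 t2 IH2|t1 IH1 t2 IH2|t1 IH1] /=; rewrite ?ffunE ?IH1 ?IH2. Qed.

Lemma biso_id (U : pred (bvec B n)) : is_boolean_isomorphism U U id.
Proof. by split; [split; first exists (fun j => BVar B j) | split => // y Uy; exists y]. Qed.

Lemma biso_comp (U : pred (bvec B n)) (U' : pred (bvec B m)) (U'' : pred (bvec B l))
    G K :
  is_boolean_isomorphism U U' G -> is_boolean_isomorphism U' U'' K ->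
  is_boolean_isomorphism U U'' (K \o G).
Proof.
move=> [[[tG hG] UG] [iG sG]] [[[tK hK] UK] [iK sK]]; split; first split.
- exists (fun j => bsubst tG (tK j)) => x Ux j /=.
  rewrite hK ?UG // beval_bsubst; congr (beval _ _).
  by apply/ffunP => i; rewrite ffunE hG.
- by move=> x Ux; apply/UK/UG.
split => [x y Ux Uy /iK e|z U''z]; first by apply: iG => //; apply: e; apply: UG.
have [y U'y <-] := sK z U''z; have [x Ux <-] := sG y U'y.
by exists x.
Qed.

End Composition.

Section Swap.
Variables (n : nat) (b c : bvec B n).
Implicit Types x y : bvec B n.

Definition swap_map x : bvec B n :=
  [ffun i => bselect (~` bdist x c) (b i) (bselect (~` bdist x b) (c i) (x i))].

Lemma swap_near_c r x : vagree r x c -> vagree r (swap_map x) b.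
Proof. by move=> /vagreeP/agree_topP h i; rewrite ffunE; apply: agree_bselect_l. Qed.

Lemma swap_near_b r x : vagree r x b -> vagree r (swap_map x) c.
Proof.
move=> hxb; apply: (vagree_split (e := bdist x c)); last first.
  have hxc : vagree (r `&` ~` bdist x c) x c by apply/vagreeP/leIr.
  apply: vagree_trans (swap_near_c hxc) _.
  exact: vagree_trans (vagree_sym (vagree_sub (leIl _ _) hxb)) hxc.
move=> i; rewrite ffunE; apply: agree_trans (agree_bselect_r _ _ _) _.
  by apply/agree_botP; rewrite complK; apply: leIr.
apply/agree_bselect_l/agree_topP; apply: le_trans (leIl _ _) _.
exact/vagreeP.
Qed.

Lemma swap_far r x :
  agree r (bdist x c) \top -> agree r (bdist x b) \top -> vagree r (swap_map x) x.
Proof.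
move=> /agree_topP hc /agree_topP hb i; rewrite ffunE.
apply: agree_trans (agree_bselect_r _ _ _) _; first by apply/agree_botP; rewrite complK.
by apply/agree_bselect_r/agree_botP; rewrite complK.
Qed.

Lemma swap_c : swap_map c = b.
Proof. by apply: (vagree_cases (e := \top)); apply: swap_near_c. Qed.

Lemma swap_fixed y : bdist c y = bdist b y -> swap_map y = y.
Proof.
rewrite bdistC [bdist b y]bdistC => hd.
apply: (vagree_cases (e := bdist y c)).
  by apply: swap_far; apply/agree_topP; rewrite -?hd.
have hyc : vagree (~` bdist y c) y c by apply/vagreeP.
have hyb : vagree (~` bdist y c) y b by apply/vagreeP; rewrite hd.
exact: vagree_trans (swap_near_c hyc) (vagree_sym hyb).
Qed.

(* Check the involution separately near c, near b, and away from both. *)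
Lemma swap_involutive : involutive swap_map.
Proof.
move=> x; set y := swap_map x.
apply: (vagree_cases (e := bdist x c)); last first.
  have hxc : vagree (~` bdist x c) x c by apply/vagreeP.
  exact: vagree_trans (swap_near_b (swap_near_c hxc)) (vagree_sym hxc).
apply: (vagree_split (e := bdist x b)); last first.
  have hxb : vagree (bdist x c `&` ~` bdist x b) x b by apply/vagreeP/leIr.
  exact: vagree_trans (swap_near_c (swap_near_b hxb)) (vagree_sym hxb).
set R := bdist x c `&` bdist x b.
have hRc : agree R (bdist x c) \top by apply/agree_topP/leIl.
have hRb : agree R (bdist x b) \top by apply/agree_topP/leIr.
have hyx : vagree R y x := swap_far hRc hRb.
have hyc : agree R (bdist y c) \top.
  exact: agree_trans (agree_bdist hyx (vagree_refl R c)) hRc.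
have hyb : agree R (bdist y b) \top.
  exact: agree_trans (agree_bdist hyx (vagree_refl R b)) hRb.
exact: vagree_trans (swap_far hyc hyb) hyx.
Qed.

Variable p : bterm B n.
Hypotheses (Wb : bdomain p b) (Wc : bdomain p c).

(* On each of the three regions the swap agrees with b, c or x, all in W. *)
Lemma swap_bdomain x : bdomain p x -> bdomain p (swap_map x).
Proof.
move=> Wx; apply: (bdomain_cases (e := bdist x c)); last first.
  by apply: bdomain_agree Wb _; apply/swap_near_c/vagreeP.
apply: (agree_split (e := bdist x b)); last first.
  by apply: bdomain_agree Wc _; apply/swap_near_b/vagreeP/leIr.
by apply: bdomain_agree Wx _; apply: swap_far; apply/agree_topP; [apply: leIl | apply: leIr].
Qed.

Lemma swap_biso : is_boolean_isomorphism (bdomain p) (bdomain p) swap_map.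
Proof.
split; first split.
- have coord j : is_boolean_function (fun x => swap_map x j).
    have [t ht] := bfun_bselect (bfun_compl (bfun_bdist c)) (bfun_const n (b j))
      (bfun_bselect (bfun_compl (bfun_bdist b)) (bfun_const n (c j)) (bfun_var j)).
    by exists t => x; rewrite ffunE ht.
  have [t ht] := fin_all_exists coord.
  by exists t => x _ j; apply: ht.
- exact: swap_bdomain.
split => [x y _ _ /(congr1 swap_map)|y Wy]; first by rewrite !swap_involutive.
by exists (swap_map y); [apply: swap_bdomain | apply: swap_involutive].
Qed.

End Swap.

Section Extension.
Variables (n : nat) (p : bterm B n) (f : bvec B n -> bvec B n).

(* A distance-preserving map on a finite list of points of W extends to a
   Boolean automorphism of W: extend on the tail, then correct the image of
   the head by a swap, which fixes the images of the tail. *)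
Lemma extend_isometry (L : seq (bvec B n)) :
  {in L, forall x, bdomain p x} -> {in L, forall x, bdomain p (f x)} ->
  {in L &, forall x y, bdist (f x) (f y) = bdist x y} ->
  exists F, is_boolean_isomorphism (bdomain p) (bdomain p) F /\ {in L, F =1 f}.
Proof.
elim: L => [|a L IH] hW hfW hd; first by exists id; split; [apply: biso_id |].
have sub : {subset L <= a :: L} by move=> x hx; rewrite inE hx orbT.
have [G [isoG hG]] : exists G, is_boolean_isomorphism (bdomain p) (bdomain p) G
    /\ {in L, G =1 f}.
  by apply: IH => [x /sub/hW | x /sub/hfW | x y /sub hx /sub hy]; last apply: hd.
have Wa : bdomain p a by apply: hW; rewrite inE eqxx.
have WGa : bdomain p (G a) by case: isoG => [[_ GW] _]; apply: GW.
have Wfa : bdomain p (f a) by apply: hfW; rewrite inE eqxx.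
exists (swap_map (f a) (G a) \o G); split; first exact: biso_comp isoG (swap_biso Wfa WGa).
move=> x; rewrite inE => /predU1P[-> | hx] /=; first exact: swap_c.
have Wx : bdomain p x by apply/hW/sub.
rewrite (hG x hx) swap_fixed // -(hG x hx) (biso_bdist isoG Wa Wx) (hG x hx).
by rewrite hd // ?inE ?eqxx //; apply: sub.
Qed.

End Extension.
End BooleanDomains.

Theorem mainTheorem3 (d : Order.disp_t) (B : ctbDistrLatticeType d) (n : nat)
  (p : bterm B n) (A A' : seq (bvec B n)) (f : bvec B n -> bvec B n) :
  (forall x, x \in A -> bdomain p x) ->
  (forall x, x \in A' -> bdomain p x) ->
  (forall x, x \in A -> f x \in A') ->
  (forall x y, x \in A -> y \in A -> f x = f y -> x = y) ->
  (forall y, y \in A' -> exists2 x, x \in A & f x = y) ->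
  ((exists F : bvec B n -> bvec B n,
      is_boolean_isomorphism (bdomain p) (bdomain p) F
      /\ (forall x, x \in A -> F x = f x))
   <->
   (forall x y, x \in A -> y \in A -> bdist (f x) (f y) = bdist x y)).
Proof.
move=> WA WA' fA _ _; split => [[F [isoF hF]] x y hx hy | hd].
  by rewrite -(hF x hx) -(hF y hy); apply: biso_bdist isoF (WA x hx) (WA y hy).
by apply: extend_isometry => // x hx; apply/WA'/fA.
Qed.
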